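(* Let $n\ge3$. For every 2-page book drawing $D$ of $K_n$ and every integer $k$ with $0\le k<n/2-1$, \[ E_{\le\le k}(D)\ge 3\binom{k+3}3 . \]
   Context: A 2-page book drawing of $K_n$: vertices on a line (spine), each edge a simple arc in one of the two closed half-planes bounded by the spine; one may take the vertices to be $(1,0),\dots,(n,0)$ and non-spine edges to be semicircles, giving a good drawing. In a good drawing, for distinct vertices $p,q,r$, $r$ is on the left (right) of $\overrightarrow{pq}$ if the triangle formed by edges $pq,qr,rp$ traced in order $p,q,r$ is oriented counterclockwise (clockwise). An edge $pq$ is a $k$-edge if exactly $k$ of the other $n-2$ vertices lie on one side of it (so also an $(n-2-k)$-edge); each edge is a $k$-edge for a unique $0\le k\le\lfloor n/2\rfloor-1$, and $E_k(D)$ counts edges with that index. $E_{\le k}(D)=\sum_{j=0}^kE_j(D)$ and $E_{\le\le k}(D)=\sum_{j=0}^kE_{\le j}(D)=\sum_{i=0}^k(k+1-i)E_i(D)$. *)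

From mathcomp Require Import all_boot.
Set Implicit Arguments. Unset Strict Implicit. Unset Printing Implicit Defensive.

(* A 2-page book drawing of K_n: vertices 0,...,n-1 placed on the spine in
   this order, and each edge {i,j} (i < j) drawn as a semicircle in the upper
   page (page i j = true) or the lower page (page i j = false).  Only the
   values page i j with i < j are used. *)
Definition book_drawing (n : nat) := 'I_n -> 'I_n -> bool.

Section BookDrawing.
Variables (n : nat) (D : book_drawing n).

Definition upper (a b : 'I_n) : bool :=
  if a < b then D a b else D b a.

Definition omin (x y : 'I_n) : 'I_n := if x < y then x else y.
Definition omax (x y : 'I_n) : 'I_n := if x < y then y else x.

Definition even_order (p q r : 'I_n) : bool :=
  [|| (p < q) && (q < r), (q < r) && (r < p) | (r < p) && (p < q)].

(* For
   a < b < c, the triangle a -> b -> c -> a of the semicircle drawing is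
   counterclockwise iff the edge {a,c} lies in the upper page; an odd
   permutation of the traversal order reverses the orientation. *)
Definition ccw (p q r : 'I_n) : bool :=
  let a := omin p (omin q r) in
  let c := omax p (omax q r) in
  if even_order p q r then upper a c else ~~ upper a c.

Definition left_count (p q : 'I_n) : nat :=
  #|[set r : 'I_n | [&& r != p, r != q & ccw p q r]]|.

(* the unique k with 0 <= k <= n/2 - 1 such that pq is a k-edge *)
Definition edge_index (p q : 'I_n) : nat :=
  minn (left_count p q) (n - 2 - left_count p q).

Definition E (k : nat) : nat :=
  #|[set e : 'I_n * 'I_n | (e.1 < e.2) && (edge_index e.1 e.2 == k)]|.

Definition E_le (k : nat) : nat := \sum_(j < k.+1) E j.

Definition E_lele (k : nat) : nat := \sum_(j < k.+1) E_le j.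

End BookDrawing.

From mathcomp Require Import all_boot zify.
Set Implicit Arguments. Unset Strict Implicit. Unset Printing Implicit Defensive.

(* [E_lele D k] is the weight [index_weight D k.+1] that gives each edge of index
   [i <= k] the weight [k + 1 - i]; we bound [index_weight D t] by [3 'C(t + 2, 3)]
   by induction on [t], deleting the leftmost vertex [0].  An edge pq avoiding [0]
   weighs at least as much at [t + 1] in [D] as at [t] in [D - 0], and one more
   when the side of pq away from [0] has at most [t] vertices; so the weight grows
   at least by the weight of the star at [0] plus the number of such edges.  The left counts
   of the star edges [0q] are pairwise distinct, which makes the star weigh at
   least [2 'C(t + 2, 2)].  For a fixed right end q, an injective bound on the size
   of the far sides shows that at least [q + t + 2 - m] of the edges pq qualify,
   giving ['C(t + 2, 2)] edges in all; and [3 'C(t+2,3) + 3 'C(t+2,2) = 3 'C(t+3,3)]. *)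

Lemma sum_leq_ord (x K : nat) : \sum_(j < K) (x <= j : nat) = K - x.
Proof.
elim: K => [|K IH]; first by rewrite big_ord0.
by rewrite big_ord_recr /= IH; case: (leqP x K) => h; lia.
Qed.

Lemma sum_ord_succ (K : nat) : \sum_(j < K) j.+1 = 'C(K.+1, 2).
Proof.
elim: K => [|K IH]; first by rewrite big_ord0.
by rewrite big_ord_recr /= IH [in RHS]binS bin1.
Qed.

Lemma sub_minn_sum (a b t : nat) : t.*2 <= (a + b).+1 ->
  t - minn a b = \sum_(j < t) ((a <= j) + (b <= j)).
Proof. by rewrite big_split /= !sum_leq_ord; lia. Qed.

(* Pigeonhole: injective values below [M] on at least [M] points fill [0, M). *)
Lemma injective_count_small (T : finType) (P : pred T) (F : T -> nat) M t :
  {in P &, injective F} -> {in P, forall x, F x < M} -> M <= #|P| -> t < M ->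
  t < \sum_(x in P) (F x <= t : nat).
Proof.
move=> injF ltFM leMP ltM.
rewrite -big_mkcondr /= -big_enum_cond sum1_count.
set s := [seq F x | x <- enum P].
have uniq_s : uniq s.
  by rewrite map_inj_in_uniq ?enum_uniq // => x y; rewrite !mem_enum; apply: injF.
have large_s : size (filter (fun y => t < y) s) <= M - t.+1.
  rewrite -(size_iota t.+1 (M - t.+1)); apply: uniq_leq_size; first exact: filter_uniq.
  move=> y; rewrite mem_filter mem_iota => /andP [lt_ty /mapP [x Px Ey]].
  by rewrite mem_enum in Px; have := ltFM x Px; lia.
have := count_predC (fun y => t < y) s.
rewrite -size_filter size_map -cardE.
have -> : count (predC (fun y => t < y)) s = count (fun x => F x <= t) (enum P).
  by rewrite count_map; apply: eq_count => x /=; rewrite -leqNgt.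
lia.
Qed.

Lemma sum_eq_ord (x J : nat) : \sum_(j < J) (x == j : nat) = (x < J).
Proof.
elim: J => [|J IH]; first by rewrite big_ord0.
by rewrite big_ord_recr /= IH; case: (ltngtP x J) => h; lia.
Qed.

Lemma ord_inj_in_ltn n (P : pred 'I_n) (F : 'I_n -> nat) :
  (forall a b, P a -> P b -> a < b -> F a != F b) -> {in P &, injective F}.
Proof.
move=> neqF a b Pa Pb eqF; case: (ltngtP a b) => [ab|ba|]; last exact: val_inj.
- by move: (neqF a b Pa Pb ab); rewrite eqF eqxx.
- by move: (neqF b a Pb Pa ba); rewrite eqF eqxx.
Qed.

Lemma card_ord_ltn n (q : 'I_n) : #|[pred p : 'I_n | p < q]| = q.
Proof. by rewrite -sum1_card (big_ord_narrow (ltnW (ltn_ord q))) sum1_card card_ord. Qed.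

Lemma sum_other_vertices n (p q : 'I_n) : p != q ->
  \sum_(r : 'I_n) ((r != p) && (r != q) : nat) = n - 2.
Proof.
move=> pq.
have split_one r : 1 = (r == p) + (r == q) + ((r != p) && (r != q)) :> nat.
  by case: (eqVneq r p) => [->|]; [rewrite (negbTE pq) | case: (eqVneq r q)].
have sum_eq1 a : \sum_(r : 'I_n) (r == a : nat) = 1.
  by rewrite (bigD1 a) //= eqxx big1 // => r /negbTE ->.
have := sum_nat_const_nat 0 n 1; rewrite big_mkord (eq_bigr _ (fun r _ => split_one r)).
by rewrite !big_split /= !sum_eq1; lia.
Qed.

Lemma sum_ord_range n lo hi : \sum_(r < n) (lo <= r < hi : nat) = minn hi n - lo.
Proof.
elim: n => [|n IH]; first by rewrite big_ord0; lia.
by rewrite big_ord_recr /= IH; case: (leqP lo n); case: (ltnP n hi); lia.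
Qed.

Definition count_range n (P : pred 'I_n) lo hi :=
  \sum_(r < n) ((lo <= r < hi) && P r : nat).

Section CountRange.
Variables (n : nat) (P : pred 'I_n).

Lemma count_range_le lo hi : count_range P lo hi <= hi - lo.
Proof.
apply: (@leq_trans (\sum_(r < n) (lo <= r < hi : nat))); last by rewrite sum_ord_range; lia.
by apply: leq_sum => r _; case: (lo <= r < hi); case: (P r).
Qed.

Lemma count_range_cat lo mid hi : lo <= mid <= hi ->
  count_range P lo hi = count_range P lo mid + count_range P mid hi.
Proof.
move=> /andP [lo_mid mid_hi]; rewrite /count_range -big_split /=.
apply: eq_bigr => r _; case: (P r); rewrite ?andbT ?andbF //.
by case: (leqP lo r); case: (ltnP r hi); case: (ltnP r mid); lia.
Qed.

Lemma count_range1 (b : 'I_n) : count_range P b b.+1 = P b.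
Proof.
rewrite /count_range (bigD1 b) //= leqnn ltnSn big1 ?addn0 // => r.
by rewrite -(inj_eq val_inj) /= ltnS -eqn_leq eq_sym => /negbTE ->.
Qed.

End CountRange.

Lemma count_range_const n (c : bool) lo hi : hi <= n ->
  count_range (fun _ : 'I_n => c) lo hi = c * (hi - lo).
Proof.
move=> hi_n; rewrite /count_range; case: c; last by rewrite big1 // => r _; rewrite andbF.
under eq_bigr do rewrite andbT.
by rewrite sum_ord_range (minn_idPl hi_n) mul1n.
Qed.

Lemma ltn_sorted3 (a b c : nat) : a < b -> b < c ->
  [/\ a < c, (b < a) = false, (c < b) = false & (c < a) = false].
Proof. by move=> ab bc; split; lia. Qed.

Section Orientation.
Variables (n : nat) (D : book_drawing n).

Lemma ccw_before (p q r : 'I_n) : r < p -> p < q -> ccw D p q r = upper D r q.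
Proof.
move=> rp pq; have [rq pr qp qr] := ltn_sorted3 rp pq.
rewrite /ccw /even_order /omin /omax; by do 3!rewrite ?rp ?pq ?rq ?pr ?qp ?qr /=.
Qed.

Lemma ccw_between (p q r : 'I_n) : p < r -> r < q -> ccw D p q r = ~~ upper D p q.
Proof.
move=> pr rq; have [pq rp qr qp] := ltn_sorted3 pr rq.
rewrite /ccw /even_order /omin /omax; by do 3!rewrite ?pr ?rq ?pq ?rp ?qr ?qp /=.
Qed.

Lemma ccw_after (p q r : 'I_n) : p < q -> q < r -> ccw D p q r = upper D p r.
Proof.
move=> pq qr; have [pr qp rq rp] := ltn_sorted3 pq qr.
rewrite /ccw /even_order /omin /omax; by do 3!rewrite ?pq ?qr ?pr ?qp ?rq ?rp /=.
Qed.

Definition side_count (p q : 'I_n) (b : bool) :=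
  \sum_r ((r != p) && (r != q) && (ccw D p q r == b) : nat).

Definition opposite_count (p q v : 'I_n) := side_count p q (~~ ccw D p q v).

Lemma left_countE p q : left_count D p q = side_count p q true.
Proof.
rewrite /left_count -sum1_card big_mkcond /=; apply: eq_bigr => r _.
by rewrite inE andbA eqb_id; case: ifP.
Qed.

Lemma side_count_add p q : p != q -> side_count p q true + side_count p q false = n - 2.
Proof.
move=> pq; rewrite -big_split -(sum_other_vertices pq) /=; apply: eq_bigr => r _.
by case: (r != p); case: (r != q); case: (ccw D p q r).
Qed.

Lemma left_count_le p q : p != q -> left_count D p q <= n - 2.
Proof. by move=> pq; rewrite left_countE -(side_count_add pq) leq_addr. Qed.

Lemma opposite_countE p q v : p != q -> opposite_count p q v =
  if ccw D p q v then n - 2 - left_count D p q else left_count D p q.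
Proof.
move=> pq; rewrite /opposite_count left_countE -(side_count_add pq).
by case: (ccw D p q v); rewrite /= ?addKn.
Qed.

End Orientation.

Definition delete_leftmost m (D : book_drawing m.+1) : book_drawing m :=
  fun i j => D (lift ord0 i) (lift ord0 j).

Lemma lift0_ltn m (a b : 'I_m) : (lift ord0 a < lift ord0 b) = (a < b).
Proof. by rewrite !lift0 ltnS. Qed.

Section DeleteLeftmost.
Variables (m : nat) (D : book_drawing m.+1).

Lemma ccw_delete_leftmost p q r :
  ccw D (lift ord0 p) (lift ord0 q) (lift ord0 r) = ccw (delete_leftmost D) p q r.
Proof.
have omin_lift a b : omin (lift ord0 a) (lift ord0 b) = lift ord0 (omin a b).
  by rewrite /omin lift0_ltn; case: (a < b).
have omax_lift a b : omax (lift ord0 a) (lift ord0 b) = lift ord0 (omax a b).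
  by rewrite /omax lift0_ltn; case: (a < b).
have upper_lift a b : upper D (lift ord0 a) (lift ord0 b) = upper (delete_leftmost D) a b.
  by rewrite /upper lift0_ltn.
by rewrite /ccw /even_order !lift0_ltn !omin_lift !omax_lift upper_lift.
Qed.

Lemma left_count_lift0 p q :
  left_count D (lift ord0 p) (lift ord0 q) =
  left_count (delete_leftmost D) p q + ccw D (lift ord0 p) (lift ord0 q) ord0.
Proof.
rewrite !left_countE /side_count big_ord_recl addnC; congr (_ + _).
  by apply: eq_bigr => r _; rewrite !(inj_eq lift_inj) ccw_delete_leftmost.
by rewrite !neq_lift eqb_id.
Qed.

End DeleteLeftmost.

Definition index_weight n (D : book_drawing n) t :=
  \sum_(p < n) \sum_(q < n) ((p < q) * (t - edge_index D p q)).

Lemma E_sum n (D : book_drawing n) j :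
  E D j = \sum_(p < n) \sum_(q < n) ((p < q) && (edge_index D p q == j) : nat).
Proof.
rewrite /E -sum1_card big_mkcond [RHS]pair_bigA /=.
by apply: eq_bigr => e _; rewrite inE; case: ifP.
Qed.

Lemma E_le_sum n (D : book_drawing n) j :
  E_le D j = \sum_(p < n) \sum_(q < n) ((p < q) * (edge_index D p q <= j)).
Proof.
rewrite /E_le; under eq_bigr do rewrite E_sum.
rewrite exchange_big; apply: eq_bigr => p _; rewrite exchange_big; apply: eq_bigr => q _.
case: (p < q); last by rewrite big1.
by rewrite mul1n sum_eq_ord ltnS.
Qed.

Lemma E_lele_index_weight n (D : book_drawing n) k : E_lele D k = index_weight D k.+1.
Proof.
rewrite /E_lele; under eq_bigr do rewrite E_le_sum.
rewrite exchange_big; apply: eq_bigr => p _; rewrite exchange_big; apply: eq_bigr => q _.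
case: (p < q); last by rewrite big1.
by under eq_bigr do rewrite mul1n; rewrite mul1n sum_leq_ord.
Qed.

Section RemoveLeftmost.
Variables (m : nat) (D : book_drawing m.+1).

Definition star_weight t := \sum_(q < m) (t - edge_index D ord0 (lift ord0 q)).

Lemma index_weight_lift0 t : index_weight D t = star_weight t +
  \sum_(p < m) \sum_(q < m) ((p < q) * (t - edge_index D (lift ord0 p) (lift ord0 q))).
Proof.
rewrite /index_weight big_ord_recl; congr (_ + _).
  by rewrite big_ord_recl /= add0n; under eq_bigr do rewrite mul1n.
apply: eq_bigr => p _; rewrite big_ord_recl mul0n add0n.
by under eq_bigr do rewrite lift0_ltn.
Qed.

Lemma index_weight_succ t : t.*2.+2 <= m ->
  index_weight (delete_leftmost D) t + star_weight t.+1 +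
  \sum_(p < m) \sum_(q < m) ((p < q) * (opposite_count D (lift ord0 p) (lift ord0 q) ord0 <= t))
  <= index_weight D t.+1.
Proof.
move=> tm; rewrite index_weight_lift0 addnAC [X in _ <= X]addnC leq_add2r -big_split /=.
apply: leq_sum => p _; rewrite -big_split /=; apply: leq_sum => q _.
case: (ltnP p q) => pq; last by rewrite !mul0n.
have lift_pq : lift ord0 p != lift ord0 q by rewrite (inj_eq lift_inj) neq_ltn pq.
have := left_count_le D lift_pq; rewrite !mul1n /edge_index opposite_countE //.
rewrite left_count_lift0; case: ccw => /=; lia.
Qed.

End RemoveLeftmost.

Section StarOfLeftmost.
Variables (m : nat) (D : book_drawing m.+1).

Lemma left_count_leftmost (q : 'I_m.+1) : 0 < q ->
  left_count D ord0 q = ~~ upper D ord0 q * (q - 1) + count_range (upper D ord0) q.+1 m.+1.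
Proof.
move=> q_gt0; rewrite left_countE /side_count.
rewrite -(@count_range_const m.+1 (~~ upper D ord0 q) 1 q); last exact: ltnW.
rewrite /count_range -big_split /=; apply: eq_bigr => r _.
rewrite -!(inj_eq val_inj) /=; case: (posnP r) => [-> //|r_gt0].
case: (ltngtP r q) => [rq|qr|/val_inj -> //] /=.
- by rewrite ccw_between // addn0 eqb_id.
- by rewrite ccw_after // eqb_id ltn_ord.
Qed.

Lemma left_count_leftmost_inj : injective (fun q : 'I_m => left_count D ord0 (lift ord0 q)).
Proof.
apply: in2T; apply: (@ord_inj_in_ltn _ predT) => a b _ _ ab.
rewrite !left_count_leftmost ?lift0 //.
set C := count_range (upper D ord0).
have b_m := ltn_ord b.
have page_b := count_range1 (upper D ord0) (lift ord0 b); rewrite lift0 -/C in page_b.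
have -> : C a.+2 m.+1 = C a.+2 b.+1 + C b.+1 b.+2 + C b.+2 m.+1.
  by rewrite -!count_range_cat //; lia.
have := count_range_le (upper D ord0) a.+2 b.+1; rewrite -/C page_b.
by case: upper; case: upper => /=; lia.
Qed.

Lemma star_weight_ge t : t.*2.+2 <= m -> 2 * 'C(t.+2, 2) <= star_weight D t.+1.
Proof.
move=> tm.
set L := fun q : 'I_m => left_count D ord0 (lift ord0 q).
have L_le q : L q <= m.+1 - 2 by apply/left_count_le/neq_lift.
have -> : star_weight D t.+1 =
    \sum_(j < t.+1) \sum_q ((L q <= j) + (m.+1 - 2 - L q <= j)).
  rewrite [RHS]exchange_big /=; apply: eq_bigr => q _.
  by rewrite /edge_index sub_minn_sum //; have := L_le q; lia.
rewrite -sum_ord_succ mul2n -addnn -big_split /=; apply: leq_sum => j _.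
rewrite big_split /=.
have j_m : j < m by have := ltn_ord j; lia.
have count_small (F : 'I_m -> nat) : injective F -> (forall q, F q < m) ->
    j < \sum_q (F q <= j : nat).
  move=> injF ltFm; have := @injective_count_small _ predT F m j (in2W injF).
  by rewrite (eq_bigl predT) //; apply => //; rewrite card_ord.
apply: leq_add.
  apply: count_small => [|q]; first exact: left_count_leftmost_inj.
  by have := L_le q; lia.
apply: count_small => [a b /= eq_ab|q]; last by have := L_le q; lia.
by apply: left_count_leftmost_inj; move: eq_ab (L_le a) (L_le b); rewrite /L; lia.
Qed.

End StarOfLeftmost.

Section FarSidePairs.
Variables (m : nat) (D : book_drawing m.+1) (q : 'I_m.+1).

Let same_page (r : 'I_m.+1) := upper D r q == upper D ord0 q.

(* For [0 < p < q], a vertex [r < p] lies on the side of pq away from [0] iff rq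
   and [0q] lie in different pages, and one strictly between p and q iff pq and
   [0q] lie in the same page; vertices right of q are counted crudely. *)
Let far_bound (p : 'I_m.+1) :=
  count_range (predC same_page) 0 p + same_page p * (q - 1 - p).

Lemma far_bound_inj : {in [pred p : 'I_m.+1 | p < q] &, injective far_bound}.
Proof.
apply: ord_inj_in_ltn => a b _; rewrite inE /far_bound => bq ab.
set C := count_range (predC same_page).
have -> : C 0 b = C 0 a + C a a.+1 + C a.+1 b by rewrite -!count_range_cat //; lia.
have := count_range_le (predC same_page) a.+1 b; rewrite -/C.
have := count_range1 (predC same_page) a; rewrite -/C /=.
by case: (same_page a); case: (same_page b) => /=; lia.
Qed.

Lemma far_bound_lt (p : 'I_m.+1) : p < q -> far_bound p < q.
Proof.
by rewrite /far_bound; have := count_range_le (predC same_page) 0 p; case: same_page => /=; lia.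
Qed.

Lemma far_bound0 : far_bound ord0 = q - 1.
Proof. by rewrite /far_bound /same_page eqxx /count_range big1 ?mul1n ?subn0. Qed.

Lemma opposite_count_le (p : 'I_m.+1) : 0 < p -> p < q ->
  opposite_count D p q ord0 <= far_bound p + (m - q).
Proof.
move=> p_gt0 pq; rewrite /opposite_count ccw_before // /far_bound.
rewrite (_ : q - 1 - p = q - p.+1); last lia.
rewrite -(@count_range_const m.+1 (same_page p) p.+1 q); last exact: ltnW.
rewrite -[m - q]mul1n -(@count_range_const m.+1 true q.+1 m.+1) //.
rewrite /side_count /count_range -!big_split /=; apply: leq_sum => r _.
rewrite -!val_eqE /=.
case: (ltngtP r p) => [rp|pr|/val_inj -> //]; last case: (ltngtP r q) => [rq|qr|_] //.
- have rq := ltn_trans rp pq.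
  by rewrite ccw_before // rq /= /same_page; case: upper; case: upper => /=; lia.
- by rewrite ccw_between // /same_page; case: upper; case: upper.
- by rewrite ltn_ord /= leq_b1.
Qed.

Lemma far_side_pairs_ge t : t.+1 < m ->
  q + t.+1 - m <= \sum_(p < m) ((lift ord0 p < q) * (opposite_count D (lift ord0 p) q ord0 <= t)).
Proof.
move=> tm; case: (leqP (q + t.+1) m) => [|large]; first by rewrite -subn_eq0 => /eqP ->.
have -> : q + t.+1 - m = (q + t - m).+1 by lia.
have := @injective_count_small _ [pred p : 'I_m.+1 | p < q] far_bound q (q + t - m) far_bound_inj.
have threshold_lt : q + t - m < q by lia.
rewrite card_ord_ltn => /(_ far_bound_lt (leqnn _) threshold_lt) /leq_trans; apply.
rewrite big_mkcond big_ord_recl /= inE far_bound0 (_ : q - 1 <= q + t - m = false) /=; last lia.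
rewrite if_same add0n; apply: leq_sum => p _; rewrite inE -lift0.
case: ltnP => [pq|]; last by rewrite mul0n.
have := opposite_count_le _ pq; rewrite lift0 => /(_ isT) opp_le.
case: (leqP (far_bound _)) => bound_le /=; rewrite ?mul1n ?lt0b //.
by have := ltn_ord q; lia.
Qed.

End FarSidePairs.

Lemma sum_shifted_ord_ge m s : s <= m -> 'C(s.+1, 2) <= \sum_(q < m) (q + s.+1 - m).
Proof.
move=> sm; rewrite -sum_ord_succ.
have -> : \sum_(q < m) (q + s.+1 - m) = \sum_(q < m) \sum_(j < s) (m.-1 - q <= j : nat).
  by apply: eq_bigr => q _; rewrite sum_leq_ord; have := ltn_ord q; lia.
rewrite exchange_big /=; apply: leq_sum => j _.
rewrite (eq_bigr (fun q : 'I_m => (m.-1 - j <= q < m : nat))) ?sum_ord_range.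
  by have := ltn_ord j; lia.
by move=> q _; rewrite ltn_ord andbT; have := ltn_ord q; have := ltn_ord j; lia.
Qed.

Lemma far_side_pairs_sum_ge m (D : book_drawing m.+1) t : t.+1 < m -> 'C(t.+2, 2) <=
  \sum_(p < m) \sum_(q < m) ((p < q) * (opposite_count D (lift ord0 p) (lift ord0 q) ord0 <= t)).
Proof.
move=> tm; rewrite exchange_big /=.
apply: (leq_trans (sum_shifted_ord_ge (ltnW tm))); apply: leq_sum => q _.
have := far_side_pairs_ge D (lift ord0 q) tm; rewrite {1}lift0 addSnnS => /leq_trans; apply.
by apply/eq_leq/eq_bigr => p _; rewrite lift0_ltn.
Qed.

Lemma index_weight_ge t n (D : book_drawing n) :
  t.*2 < n -> 3 * 'C(t.+2, 3) <= index_weight D t.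
Proof.
elim: t n D => [//|t IH] [//|m] D; rewrite doubleS ltnS => tm.
have tm' : t.+1 < m by lia.
have := index_weight_succ D tm.
have := IH m (delete_leftmost D) (ltnW tm).
have := star_weight_ge D tm.
have := far_side_pairs_sum_ge D tm'.
have := binS t.+2 2; lia.
Qed.

Theorem theorem6 (n : nat) (D : book_drawing n) (k : nat) :
  3 <= n -> k.*2.+2 < n ->
  3 * 'C(k + 3, 3) <= E_lele D k.
Proof.
move=> _ kn; rewrite E_lele_index_weight addn3.
by apply: index_weight_ge; rewrite doubleS.
Qed.
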